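(* Let $1\to N\to G\to\Gamma\to1$ be a short exact sequence of finite groups, with $N\lhd G$ and $\Gamma=G/N$. Then $\mathcal{K}_r^S(G/N)=1$ in the Burnside ring $\Omega(G)$ if and only if, for every prime $p$, the sequence of Sylow subgroups $1\to N_p\to G_p\to\Gamma_p\to1$ splits.
   Context: For a prime $p$ and a Sylow $p$-subgroup $G_p$ of $G$, $N_p=N\cap G_p$ and $\Gamma_p=(G_pN)/N$; a sequence $1\to A\to B\to B/A\to1$ splits if $A$ has a complement in $B$. $\Omega(G)$ is the Burnside ring of $G$ (Grothendieck ring of finite $G$-sets under disjoint union and Cartesian product), with dimension homomorphism $\alpha(X)=|X|$ and regular element $r=G/\{e\}$. $S=\{G/H_1,\dots,G/H_n\}$ where $H_1,\dots,H_n$ is a full set of representatives of the conjugacy classes of subgroups of $G$. For $x\in\Omega(G)$, $S(x)=\{s\in S: s\cdot x\in\mathbb{Z}r\}$, $\mathrm{Ind}(x)=\{m\in\mathbb{Z}: s\cdot x=m r \text{ for some } s\in S(x)\}$, and $\mathcal{K}_r^S(x)=\gcd(\mathrm{Ind}(x))$ (with $\mathcal{K}_r^S(x)=\infty$ if $S(x)=\emptyset$). *)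

From mathcomp Require Import all_boot all_fingroup all_solvable.
Set Implicit Arguments.
Unset Strict Implicit.
Unset Printing Implicit Defensive.
Import GroupScope.
Local Open Scope group_scope.

(* A finite G-set is given by a finite type T, a subset S : {set T} (the
   underlying set) and a right action act : T -> gT -> T of G on S.

   The Burnside ring Omega(G) is the free abelian group on the isomorphism
   classes of transitive G-sets, i.e. on the G/K, K ranging over subgroups of
   G up to conjugacy.  We represent an element of Omega(G) by its coefficient
   function on subgroups K of G (constant on G-conjugacy classes).  The class
   of a G-set X has as K-coefficient the number of G-orbits of X isomorphic to
   G/K, i.e. whose point stabilisers are G-conjugate to K. *)

Section Burnside.
Variable gT : finGroupType.

Definition gorbit (T : finType) (act : T -> gT -> T) (G : {set gT}) (x : T)
  : {set T} := [set act x g | g in G].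

Definition gstab (T : finType) (act : T -> gT -> T) (G : {set gT}) (x : T)
  : {set gT} := [set g in G | act x g == x].

Definition burn_coef (T : finType) (act : T -> gT -> T) (G : {set gT})
  (S : {set T}) (K : {set gT}) : nat :=
  #|[set gorbit act G x | x in S & [exists g in G, gstab act G x == K :^ g]]|.

Definition coset_set (G H : {set gT}) : {set {set gT}} := rcosets H G.
Definition coset_act (A : {set gT}) (g : gT) : {set gT} := A :* g.

Definition prod_act (T : finType) (act : T -> gT -> T)
  (p : {set gT} * T) (g : gT) : {set gT} * T := (coset_act p.1 g, act p.2 g).

Definition prod_set (T : finType) (G H : {set gT}) (S : {set T})
  : {set {set gT} * T} := setX (coset_set G H) S.

(* coefficients of the product  s . x  with s = G/H in Omega(G) *)
Definition sx_coef (T : finType) (act : T -> gT -> T) (G H : {set gT})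
  (S : {set T}) (K : {set gT}) : nat :=
  burn_coef (prod_act act) G (prod_set G H S) K.

(* s . x lies in Z r, r = G/{e}: all coefficients off the class of {e}
   vanish; then s . x = m r with m its coefficient at {e}. *)
Definition sx_in_Zr (T : finType) (act : T -> gT -> T) (G : {group gT})
  (H : {set gT}) (S : {set T}) : bool :=
  [forall K in subgroups G, (K :!=: 1) ==> (sx_coef act G H S K == 0)].

Definition sx_mult (T : finType) (act : T -> gT -> T) (G : {group gT})
  (H : {set gT}) (S : {set T}) : nat := sx_coef act G H S 1.

(* K_r^S(x): None stands for infinity (S(x) empty); otherwise the gcd of
   Ind(x) = { m | s . x = m r, s in S(x) }.  S ranges over G/H for H in all
   subgroups of G (conjugate H give isomorphic G/H, hence the same Ind). *)
Definition KrS (T : finType) (act : T -> gT -> T) (G : {group gT})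
  (S : {set T}) : option nat :=
  if [exists H in subgroups G, sx_in_Zr act G H S]
  then Some (\big[gcdn/0]_(H in subgroups G | sx_in_Zr act G H S)
               sx_mult act G H S)
  else None.

End Burnside.

From mathcomp Require Import all_boot all_fingroup all_solvable.
Set Implicit Arguments.
Unset Strict Implicit.
Unset Printing Implicit Defensive.
Import GroupScope.
Local Open Scope group_scope.

(* The stabiliser of (H a, N b) in G/H x G/N is (H :&: N)^a.  Hence
   (G/H)(G/N) is an integer multiple of the regular G-set exactly when
   H :&: N = 1, and it is then |G : N| / |H| copies of it.  So K_r^S(G/N) = 1
   iff for every prime p some H with H :&: N = 1 has |H|_p = |G : N|_p.  A
   Sylow p-subgroup of such an H, conjugated into the Sylow subgroup P of G,
   complements N :&: P in P; conversely a complement of N :&: P in P is such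
   an H. *)

Section GSets.
Variables (gT : finGroupType) (T : finType) (to : {action gT &-> T}).
Implicit Types (G K : {group gT}) (S : {set T}).

Lemma gstabE G x : gstab to G x = 'C_G[x | to].
Proof.
by apply/setP=> g; rewrite inE [RHS]inE; apply/andb_id2l=> _; apply/eqP/astab1P.
Qed.

Lemma burn_coef_eq0 G S K :
  burn_coef to G S K = 0%N <->
  {in S & G, forall x g, gstab to G x != K :^ g}.
Proof.
rewrite /burn_coef; split=> [/eqP | noK].
  rewrite cards_eq0 => /eqP/setP S0 x g xS gG; apply/negP=> /eqP stabx.
  have := S0 (gorbit to G x); rewrite in_set0 imset_f // inE xS.
  by apply/exists_inP; exists g => //; apply/eqP.
apply/eqP; rewrite cards_eq0; apply/eqP/setP=> O; rewrite in_set0.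
apply/imsetP=> -[x /setIdP[xS]].
by case/exists_inP=> g gG; rewrite (negPf (noK x g xS gG)).
Qed.

Lemma burn_coef1_regular G S :
  [acts G, on S | to] -> {in S, forall x, 'C_G[x | to] = 1} ->
  (burn_coef to G S 1%g * #|G|)%N = #|S|.
Proof.
move=> actsGS regS.
have -> : burn_coef to G S 1 = #|orbit to G @: S|.
  congr #|pred_of_set _|; apply/setP=> O; apply/imsetP/imsetP=> -[x].
    by case/setIdP=> xS _ ->; exists x.
  move=> xS ->; exists x => //; rewrite inE xS.
  apply/exists_inP; exists 1 => //.
  by rewrite gstabE regS // conjs1g.
rewrite (card_partition (orbit_partition actsGS)) -sum_nat_const.
apply: eq_bigr => _ /imsetP[x xS ->].
by rewrite -(card_orbit_stab to G x) regS // cards1 muln1.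
Qed.

End GSets.

Section CosetProductAction.
Variable gT : finGroupType.
Implicit Types (G H N : {group gT}) (A B : {set gT}).

Lemma prod_coset_act1 : (prod_act (@coset_act gT))^~ 1 =1 id.
Proof. by case=> A B; rewrite /prod_act /coset_act /= !rcoset1. Qed.

Lemma prod_coset_actM p : act_morph (prod_act (@coset_act gT)) p.
Proof. by case: p => A B a b; rewrite /prod_act /coset_act /= !rcosetM. Qed.

Definition prod_coset_action := TotalAction prod_coset_act1 prod_coset_actM.

Lemma astab1_prod_coset A B :
  'C[(A, B) | prod_coset_action] = 'C[A | 'Rs] :&: 'C[B | 'Rs].
Proof.
apply/setP=> g; apply/astab1P/setIP=> [[eA eB] | [/astab1P eA /astab1P eB]].
  by split; apply/astab1P; rewrite /= rcosetE.
by rewrite /= /prod_act /coset_act -!rcosetE eA eB.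
Qed.

Lemma gstab_prod_cosets G H N a b :
    H \subset G -> N <| G -> a \in G -> b \in G ->
  gstab (prod_act (@coset_act gT)) G (H :* a, N :* b) = (H :&: N) :^ a.
Proof.
move=> sHG /andP[_ nNG] aG bG.
rewrite (gstabE prod_coset_action) astab1_prod_coset -!rcosetE.
rewrite !(astab1_act 'Rs) ?inE // !astab1Rs.
rewrite (normsP nNG b bG) -{1}(normsP nNG a aG) -conjIg.
apply/setIidPr; rewrite -(conjGid aG) conjSg.
exact: subset_trans (subsetIl _ _) sHG.
Qed.

End CosetProductAction.

Lemma p_part_mul_dvdr p m n : prime p -> 0 < m * n ->
  ((m * n)`_p %| n) = ~~ (p %| m).
Proof.
move=> p_pr; rewrite muln_gt0 => /andP[m_gt0 n_gt0].
rewrite p_part pfactor_dvdn // lognM // -{2}[logn p n]add0n leq_add2r leqn0.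
by rewrite eqn0Ngt logn_gt0 mem_primes p_pr m_gt0.
Qed.

Lemma biggcdn_eq1P (I : finType) (P : pred I) (F : I -> nat) :
  \big[gcdn/0]_(i | P i) F i = 1%N <->
  (forall p, prime p -> exists2 i, P i & ~~ (p %| F i)).
Proof.
set d := \big[gcdn/0]_(i | P i) F i; split=> [d1 p p_pr | coprimeF].
  have [/existsP[i /andP[]] | ] := boolP [exists i, P i && ~~ (p %| F i)].
    by exists i.
  rewrite negb_exists => /forallP pF.
  have : p %| d by apply/dvdn_biggcdP=> i Pi; move: (pF i); rewrite Pi negbK.
  by rewrite d1 dvdn1 => /eqP p1; rewrite p1 in p_pr.
apply/eqP; apply: contraT=> d_neq1.
have [p p_pr p_d] : exists2 p, prime p & p %| d.
  have [-> | d_gt0] := posnP d; first by exists 2.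
  have d_gt1 : 1 < d by rewrite ltn_neqAle eq_sym d_neq1.
  by have [p] := pdivP d_gt1; exists p.
have [i Pi] := coprimeF p p_pr.
by rewrite (dvdn_trans p_d) // (biggcdn_inf i).
Qed.

Lemma KrS_eq1 (gT : finGroupType) (T : finType) (act : T -> gT -> T)
    (G : {group gT}) (S : {set T}) :
  KrS act G S = Some 1%N <->
  \big[gcdn/0]_(H in subgroups G | sx_in_Zr act G H S) sx_mult act G H S = 1%N.
Proof.
rewrite /KrS; case: ifP=> [_ | /negbT noH]; first by split=> [[] | ->].
rewrite big_pred0 // => H; apply/negP=> /andP[sHG inZrH].
by case/negP: noH; apply/exists_inP; exists H.
Qed.

Section ProductWithQuotient.
Variables (gT : finGroupType) (G N : {group gT}).
Hypothesis nsNG : N <| G.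
Implicit Types H K : {group gT}.

Lemma mem_prod_cosets H x : x \in prod_set G H (coset_set G N) ->
  exists2 a, a \in G & exists2 b, b \in G & x = (H :* a, N :* b).
Proof.
case: x => A B; rewrite in_setX => /andP[/rcosetsP[a aG ->] /rcosetsP[b bG ->]].
by exists a => //; exists b.
Qed.

Lemma acts_prod_cosets H :
  [acts G, on prod_set G H (coset_set G N) | prod_coset_action gT].
Proof.
apply/subsetP=> g gG; apply/astabsP=> -[A B].
have actsR K C : (C :* g \in rcosets K G) = (C \in rcosets K G).
  by rewrite -rcosetE (astabsP (subsetP (actsRs_rcosets K G) g gG)).
by rewrite /= !in_setX /coset_set !actsR.
Qed.

Lemma sx_in_Zr_cosets H : H \subset G ->
  sx_in_Zr (@coset_act gT) G H (coset_set G N) = (H :&: N == 1).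
Proof.
move=> sHG; apply/forall_inP/eqP=> [inZr | tiHN K].
  apply/eqP; apply: contraT=> ntHN.
  have sHN_G : (H :&: N)%G \in subgroups G.
    by rewrite inE (subset_trans (subsetIl _ _) sHG).
  have /eqP := implyP (inZr _ sHN_G) ntHN.
  move/(burn_coef_eq0 (prod_coset_action gT))/(_ (H :* 1, N :* 1) 1).
  rewrite gstab_prod_cosets // eqxx; apply=> //.
  by rewrite in_setX /coset_set -!rcosetE !imset_f.
move=> _; apply/implyP=> ntK.
apply/eqP/(burn_coef_eq0 (prod_coset_action gT)).
move=> _ g /mem_prod_cosets[a aG [b bG ->]] gG.
by rewrite gstab_prod_cosets // tiHN conjs1g eq_sym conjsg_eq1.
Qed.

Lemma sx_mult_cosets H : H \subset G -> H :&: N = 1 ->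
  (sx_mult (@coset_act gT) G H (coset_set G N) * #|H|)%N = #|G : N|.
Proof.
move=> sHG tiHN.
have regular : {in prod_set G H (coset_set G N), forall x,
                 'C_G[x | prod_coset_action gT] = 1}.
  move=> _ /mem_prod_cosets[a aG [b bG ->]].
  by rewrite -gstabE gstab_prod_cosets // tiHN conjs1g.
have := burn_coef1_regular (acts_prod_cosets H) regular.
rewrite cardsX -(Lagrange sHG) mulnA [(_ * #|coset_set G N|)%N]mulnC => /eqP.
by rewrite eqn_pmul2r ?indexg_gt0 // => /eqP.
Qed.

Lemma sx_mult_coprime_cosetsP p : prime p ->
  (exists2 H : {group gT}, (H \in subgroups G) &&
     sx_in_Zr (@coset_act gT) G H (coset_set G N)
   & ~~ (p %| sx_mult (@coset_act gT) G H (coset_set G N))) <->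
  exists2 H : {group gT}, (H \subset G) && (H :&: N == 1) & #|G : N|`_p %| #|H|.
Proof.
move=> p_pr; split=> -[H /andP[sHG tiHN]].
  rewrite inE in sHG; rewrite sx_in_Zr_cosets // in tiHN.
  rewrite -(@p_part_mul_dvdr p _ #|H|) // sx_mult_cosets ?(eqP tiHN) //.
  by exists H; rewrite ?sHG.
exists H; first by rewrite inE sHG sx_in_Zr_cosets.
by rewrite -(@p_part_mul_dvdr p _ #|H|) // sx_mult_cosets ?(eqP tiHN).
Qed.

End ProductWithQuotient.

Section SylowComplements.
Variables (gT : finGroupType) (p : nat) (G N P : {group gT}).
Hypotheses (nsNG : N <| G) (sylP : p.-Sylow(G) P).

Lemma card_Sylow_normal_index : #|P| = (#|N :&: P| * #|G : N|`_p)%N.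
Proof.
rewrite (card_Hall sylP) (card_Hall (Sylow_setI_normal nsNG sylP)).
by rewrite -(Lagrange (normal_sub nsNG)) partnM.
Qed.

Lemma Sylow_splitsP :
  [splits P, over N :&: P] <->
  exists2 H : {group gT}, (H \subset G) && (H :&: N == 1) & #|G : N|`_p %| #|H|.
Proof.
split=> [/splitsP[Q /complP[tiNPQ defP]] | [H /andP[sHG /eqP tiHN] dvd_H]].
  have sQP : Q \subset P by rewrite -defP mulG_subr.
  exists Q.
    rewrite (subset_trans sQP (pHall_sub sylP)) /=.
    by rewrite setIC -tiNPQ -setIA (setIidPr sQP).
  have := TI_cardMg tiNPQ; rewrite defP card_Sylow_normal_index => /eqP.
  by rewrite eqn_pmul2l // => /eqP <-.
have [Q sylQ] := Sylow_exists p H; have sQH := pHall_sub sylQ.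
have [x xG sQxP] :=
  Sylow_Jsub sylP (subset_trans sQH sHG) (pHall_pgroup sylQ).
have tiNPQx : N :&: P :&: Q :^ x = 1.
  apply/trivgP; rewrite -(conjs1g x) -tiHN conjIg.
  rewrite (normsP (normal_norm nsNG) x xG) subsetI.
  rewrite (subset_trans (subsetIr _ _)) ?conjSg //=.
  by rewrite !(subset_trans (subsetIl _ _)).
apply/splitsP; exists (Q :^ x)%G; apply/complP; split=> //.
apply/eqP; rewrite eqEcard mulG_subG subsetIr sQxP /=.
rewrite (TI_cardMg tiNPQx) cardJg card_Sylow_normal_index leq_mul2l.
rewrite (card_Hall sylQ) dvdn_leq ?orbT //.
by rewrite -(part_pnat_id (part_pnat p #|G : N|)) partn_dvd.
Qed.

End SylowComplements.

Theorem theorem3p9 (gT : finGroupType) (G N : {group gT}) (nNG : N <| G) :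
  KrS (@coset_act gT) G (coset_set G N) = Some 1%N <->
  (forall (p : nat) (P : {group gT}), prime p -> P \in 'Syl_p(G) ->
     [splits P, over N :&: P]).
Proof.
apply: (iff_trans (KrS_eq1 _ _ _)); apply: (iff_trans (biggcdn_eq1P _ _)).
split=> [coprimeInd p P p_pr | splitsSyl p p_pr].
  rewrite inE => sylP.
  apply/(Sylow_splitsP nNG sylP)/(sx_mult_coprime_cosetsP nNG p_pr).
  exact: coprimeInd.
have [P sylP] := Sylow_exists p G.
apply/(sx_mult_coprime_cosetsP nNG p_pr)/(Sylow_splitsP nNG sylP).
by apply: (splitsSyl p); rewrite ?inE.
Qed.
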